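(* Let $R$ be an associative ring with identity and involution $*$, and let $a\in R^{\#}\cap R^{\dagger}$. Then $a\in R^{SEP}$ if and only if $a^2a^*a^{\#}\in PE(R)$.
   Context: An involution on $R$ is a map $x\mapsto x^*$ with $(x^* )^*=x$, $(x+y)^*=x^*+y^*$, $(xy)^*=y^*x^*$. An element $a$ is Moore–Penrose invertible if there is $b$ with $aba=a$, $bab=b$, $(ab)^*=ab$, $(ba)^*=ba$; such $b$ is unique, denoted $a^{\dagger}$, and $R^{\dagger}$ is the set of such $a$. An element $a$ is group invertible if there is $b$ with $aba=a$, $bab=b$, $ab=ba$; such $b$ is unique, denoted $a^{\#}$, and $R^{\#}$ is the set of such $a$. $PE(R)=\{e\in R: e^2=e=e^*\}$ is the set of projections. For $a\in R^{\#}\cap R^{\dagger}$, $a$ is SEP if $a^*=a^{\dagger}=a^{\#}$; $R^{SEP}$ denotes the set of SEP elements. *)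

From mathcomp Require Import all_boot all_algebra.
Set Implicit Arguments. Unset Strict Implicit. Unset Printing Implicit Defensive.
Import GRing.Theory.
Local Open Scope ring_scope.

Definition involution (R : pzRingType) (star : R -> R) : Prop :=
  [/\ forall x, star (star x) = x,
      forall x y, star (x + y) = star x + star y &
      forall x y, star (x * y) = star y * star x].

Definition is_mp_inverse (R : pzRingType) (star : R -> R) (a b : R) : Prop :=
  [/\ a * b * a = a, b * a * b = b, star (a * b) = a * b & star (b * a) = b * a].

Definition is_group_inverse (R : pzRingType) (a b : R) : Prop :=
  [/\ a * b * a = a, b * a * b = b & a * b = b * a].

Definition mp_invertible (R : pzRingType) (star : R -> R) (a : R) : Prop :=
  exists b, is_mp_inverse star a b.
Definition group_invertible (R : pzRingType) (a : R) : Prop :=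
  exists b, is_group_inverse a b.

Definition projection (R : pzRingType) (star : R -> R) (e : R) : Prop :=
  e * e = e /\ e = star e.

(* SEP: a^* = a^dagger = a^#, where ad is a's MP inverse and ag its group inverse. *)
Definition SEP_wrt (R : pzRingType) (star : R -> R) (a ad ag : R) : Prop :=
  star a = ad /\ ad = ag.

(* If a^* = a^dagger = a^#, then a^2 a^* a^# = a^2 a^# a^# = a a^#, the
   projection a a^dagger.  Conversely, put p = a^2 a^* a^#.  Cancelling a^2 on
   the left and a^# on the right of p^2 = p gives a a^* a a^* a = a a^* a, and
   since a a^dagger = (a^dagger)^* a^* this reduces to a a^* a = a, i.e. a^* is
   the Moore-Penrose inverse of a.  Then p = a a^#, so a a^# is self-adjoint and
   a^# satisfies the Moore-Penrose equations as well. *)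

From mathcomp Require Import all_boot all_algebra.
Local Open Scope ring_scope.
Import GRing.Theory.

Set Implicit Arguments.
Unset Strict Implicit.

Section Involution.

Variables (R : pzRingType) (star : R -> R).
Hypothesis starP : involution star.

Lemma mp_inverse_unique (a b c : R) :
  is_mp_inverse star a b -> is_mp_inverse star a c -> b = c.
Proof.
case: starP => _ _ starM [b1 b2 b3 b4] [c1 c2 c3 c4].
have aRc : star a = star a * (a * c) by rewrite -c3 -starM c1.
have bLa : star a = b * a * star a by rewrite -b4 -starM mulrA b1.
have -> : b = b * a * c.
  by rewrite -{1}b2 -mulrA -b3 starM aRc (mulrA (star b)) -starM b3 !mulrA b2.
by rewrite -{2}c2 -c4 starM bLa -(mulrA (b * a)) -starM c4 -(mulrA (b * a)) c2.
Qed.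

Lemma mp_inverse_star (a : R) : a * star a * a = a -> is_mp_inverse star a (star a).
Proof.
case: starP => starK _ starM iso; split => //.
- by rewrite -[RHS](congr1 star iso) !starM starK mulrA.
- by rewrite starM starK.
- by rewrite starM starK.
Qed.

Lemma mp_projection (a ad : R) : is_mp_inverse star a ad -> projection star (a * ad).
Proof. by case=> d1 _ d3 _; split; rewrite // mulrA d1. Qed.

Lemma mp_star_cancel (a ad x y : R) : is_mp_inverse star a ad ->
  a * star a * x = a * star a * y -> a * ad * x = a * ad * y.
Proof.
case: starP => _ _ starM [d1 _ d3 d4] axy.
have adaE : ad * a * star a = star a by rewrite -d4 -starM mulrA d1.
have aadE : a * ad = star ad * star a by rewrite -starM d3.
rewrite aadE -!mulrA; congr (_ * _).
by rewrite -adaE -!mulrA (mulrA a) axy !mulrA.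
Qed.

Lemma group_inverse_mp (a ag : R) : is_group_inverse a ag ->
  star (a * ag) = a * ag -> is_mp_inverse star a ag.
Proof. by case=> g1 g2 g3 symm; split; rewrite // -g3. Qed.

End Involution.

Section GroupInverse.

Variables (R : pzRingType) (a ag : R).
Hypothesis aG : is_group_inverse a ag.

Lemma group_invKl : ag * a * a = a.
Proof. by case: aG => g1 _ g3; rewrite -g3 g1. Qed.

Lemma group_inv_mulKl (x : R) : ag * (a * (a * x)) = a * x.
Proof. by rewrite !mulrA group_invKl. Qed.

Lemma group_inv_sqr_mul : a ^+ 2 * ag * ag = a * ag.
Proof. by case: aG => _ g2 g3; rewrite expr2 -(mulrA a a) {1}g3 -mulrA g2. Qed.

Lemma group_inv_cancel_l (x y : R) : a * (a * x) = a * (a * y) -> a * x = a * y.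
Proof. by move/(congr1 (GRing.mul ag)); rewrite !group_inv_mulKl. Qed.

Lemma group_inv_cancel_r (x y : R) : x * ag = y * ag -> x * a = y * a.
Proof.
by move/(congr1 (GRing.mul^~ (a * a))); rewrite -!mulrA !(mulrA ag) group_invKl.
Qed.

Lemma inner_inverse_mul_group_inv (b : R) : a * b * a = a -> a * b * ag = ag.
Proof.
case: aG => _ g2 g3 aba; have agE : ag = a * ag * ag by rewrite -{1}g2 g3.
by rewrite agE !mulrA aba -agE.
Qed.

Lemma group_inv_idempotent_sandwich (u : R) :
  let p := a ^+ 2 * u * ag in p * p = p -> a * u * a * u * a = a * u * a.
Proof.
rewrite /= expr2 -!mulrA group_inv_mulKl => /group_inv_cancel_l.
by rewrite !mulrA => /group_inv_cancel_r.
Qed.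

End GroupInverse.

Theorem corollary2p7 (R : pzRingType) (star : R -> R) (a ag ad : R) :
  involution star ->
  is_group_inverse a ag ->
  is_mp_inverse star a ad ->
  (SEP_wrt star a ad ag <-> projection star (a ^+ 2 * star a * ag)).
Proof.
move=> starP aG aD; have [d1 _ _ _] := aD; split.
  by case=> -> agE; rewrite agE group_inv_sqr_mul // -agE; apply: mp_projection.
case=> p_idem p_sym.
have iso : a * star a * a = a.
  have : a * ad * (a * star a * a) = a * ad * a.
    apply: (mp_star_cancel starP aD); rewrite !mulrA.
    exact: (group_inv_idempotent_sandwich aG p_idem).
  by rewrite !mulrA d1.
have adE : ad = star a := mp_inverse_unique starP aD (mp_inverse_star starP iso).
have pE : a ^+ 2 * star a * ag = a * ag.
  by rewrite -adE expr2 -(mulrA a a) -mulrA inner_inverse_mul_group_inv.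
have agD : is_mp_inverse star a ag by apply: group_inverse_mp; rewrite // -pE.
by split; [rewrite adE | exact: (mp_inverse_unique starP aD agD)].
Qed.
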